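(* Let $M=(v_1,\dots,v_n)$ be a finite list of nonzero vectors generating $\mathbb{F}_2^3$ such that the multiplicities of the distinct vectors in $M$ have greatest common divisor $1$. Let $\lambda_u=n-\sum_{i=1}^n(-1)^{u\cdot v_i}$ for $u\in\mathbb{F}_2^3\setminus\{0\}$, and let $d_1\le d_2\le\cdots\le d_7$ be the numbers $v_2(\lambda_u)$, $u\ne0$, in increasing order. Let $c_1$ be the order of the largest cyclic factor of the Sylow-$2$ subgroup of $K(G(\mathbb{F}_2^3,M))$. Then $c_1=2^{d_7+1}$ if the $d_i$ are not all equal, and $c_1=2^{d_7}$ if $d_1=d_2=\cdots=d_7$.
   Context: The Cayley graph $G(\mathbb{F}_2^3,M)$ has vertex set $\mathbb{F}_2^3$ and Laplacian $L$ indexed by $\mathbb{F}_2^3$ with $L_{u,u}=n$ and $L_{u,w}=-\#\{i:u+v_i=w\}$ for $u\ne w$; $\operatorname{coker}L\cong\mathbb{Z}\oplus K(G)$ with $K(G)$ finite abelian (the sandpile group). The $\lambda_u$ are the nonzero eigenvalues of $L$. $v_2$ is the $2$-adic valuation. *)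

From HB Require Import structures.
From mathcomp Require Import all_boot all_order all_algebra.
Set Implicit Arguments. Unset Strict Implicit. Unset Printing Implicit Defensive.
Import Order.TTheory GRing.Theory Num.Theory.
Local Open Scope ring_scope.

Definition V := 'rV['F_2]_3.

Definition dot (u v : V) : 'F_2 := (u *m v^T) 0 0.

(* Laplacian of the Cayley graph G(F_2^3, M), n = size M:
   L u u = n,  L u w = - #{i : u + v_i = w} for u <> w. *)
Definition lap (M : seq V) (u w : V) : int :=
  if u == w then (size M)%:Z else - (count (fun v => u + v == w) M)%:Z.

(* x : Z^V lies in the image L(Z^V) (i.e. is zero in coker L). *)
Definition inImL (M : seq V) (x : V -> int) : Prop :=
  exists y : V -> int, forall u, x u = \sum_(w : V) lap M u w * y w.

Definition coker_order (M : seq V) (x : V -> int) (m : nat) : Prop :=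
  (0 < m)%N /\ inImL M (fun u => (m%:Z * x u)%R) /\
  (forall j : nat, (0 < j < m)%N -> ~ inImL M (fun u => (j%:Z * x u)%R)).

Definition lam (M : seq V) (u : V) : int :=
  (size M)%:Z - \sum_(v <- M) (if dot u v == 0 then 1 else -1).

Definition d2 (M : seq V) (u : V) : nat := logn 2 `|lam M u|%N.

(* The characters chi s g = (-1)^(s.g) diagonalise the Laplacian: the transform
   fourier x s = sum_g chi s g * x g sends L y to lam_s * fourier y, and applied twice it
   multiplies by 8.  Hence x lies in the image of L iff fourier x = lam * fourier y for
   some integer vector y, and a vector is the transform of an integer vector iff its
   transform is divisible by 8.
   Write lam_s = 2^(d_s) o_s with o_s odd and let C be the product of the o_s.  If
   fourier x 0 = 0 (as for every element of 2-power order), then 2^e C x is in the image: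
   the transform required of y is (2^e C / lam_s) fourier x, and the lift exists because
   the parity of 2^e C / lam_s does not depend on s -- this is what forces e to be d_max
   when all d_s agree and d_max + 1 otherwise.  Conversely, the test vector with
   transform 1 - chi h, resp. (1 - chi g)(1 - chi h), is not killed by 2^(e-1) C:
   weighting the transform of a preimage by 1 - chi k leaves modulo 8 a single term 4,
   whereas the weighted sum over all s is 8 (y 0 - y k). *)

From HB Require Import structures.
From mathcomp Require Import all_boot all_order all_algebra.
From mathcomp Require Import zify ring.
Import Order.TTheory GRing.Theory Num.Theory.
Local Open Scope ring_scope.
Set Implicit Arguments. Unset Strict Implicit. Unset Printing Implicit Defensive.

Lemma F2_cases (a : 'F_2) : a = 0 \/ a = 1.
Proof. by case: a => [[|[|//]] ?]; [left | right]; apply: val_inj. Qed.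

Lemma F2_addrr (a : 'F_2) : a + a = 0.
Proof. exact/addrr_pchar2/pchar_Fp. Qed.

Lemma F2_addr_eq0 (a b : 'F_2) : (a + b == 0) = ((a == 0) == (b == 0)).
Proof. by case: (F2_cases a) => ->; case: (F2_cases b) => ->. Qed.

Lemma dvdz2_oddB (c : nat) (b : bool) : odd c = b -> (2 %| c%:Z - b%:Z)%Z.
Proof.
move=> <-; apply/dvdzP; exists (c./2)%:Z.
by rewrite -{1}(odd_double_half c) -muln2 PoszD PoszM addrAC subrr add0r.
Qed.

Lemma dvdz8_mul4B (c : nat) (b : bool) : odd c = b -> (8 %| 4 * c%:Z - 4 * b%:Z)%Z.
Proof. by move/dvdz2_oddB; rewrite -mulrBr (_ : 8 = 4 * 2) // dvdz_mul2l. Qed.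

Lemma count_intE (T : Type) (p : pred T) s : (count p s)%:Z = \sum_(v <- s) (p v)%:Z.
Proof. by elim: s => [|v s IH]; rewrite ?big_nil ?big_cons //= PoszD IH. Qed.

Section Characters.
Variable n : nat.
Local Notation vec := 'rV['F_2]_n.

Lemma addvv (u : vec) : u + u = 0.
Proof. by apply/matrixP => i j; rewrite !mxE F2_addrr. Qed.

Lemma oppv (u : vec) : - u = u.
Proof. by apply/eqP; rewrite eq_sym -addr_eq0 addvv. Qed.

Definition dotv (u v : vec) : 'F_2 := (u *m v^T) 0 0.

Lemma dotvE u v : dotv u v = \sum_k u 0 k * v 0 k.
Proof. by rewrite /dotv !mxE; apply: eq_bigr => k _; rewrite !mxE. Qed.

Lemma dotvC u v : dotv u v = dotv v u.
Proof. by rewrite !dotvE; apply: eq_bigr => k _; rewrite mulrC. Qed.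

Lemma dotvDr u v w : dotv u (v + w) = dotv u v + dotv u w.
Proof. by rewrite /dotv linearD /= mulmxDr mxE. Qed.

Lemma dotvZr u a v : dotv u (a *: v) = a * dotv u v.
Proof. by rewrite /dotv linearZ /= -scalemxAr mxE. Qed.

Lemma dotv0r u : dotv u 0 = 0.
Proof. by rewrite /dotv linear0 mulmx0 mxE. Qed.

Lemma dotv0l v : dotv 0 v = 0.
Proof. by rewrite dotvC dotv0r. Qed.

Lemma dotv_delta u i : dotv u (delta_mx 0 i) = u 0 i.
Proof.
rewrite dotvE (bigD1 i) //= big1 => [|k /negbTE ki]; first by rewrite mxE !eqxx mulr1 addr0.
by rewrite mxE ki mulr0.
Qed.

Lemma dotv_span (M : seq vec) s : <<M>>%VS = fullv ->
  (forall v, v \in M -> dotv s v = 0) -> s = 0.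
Proof.
move=> M_span sM0.
have s_orth w : dotv s w = 0.
  have /coord_span -> : w \in <<in_tuple M>>%VS by rewrite M_span memvf.
  rewrite (big_morph _ (dotvDr s) (dotv0r s)) big1 // => i _.
  by rewrite dotvZr sM0 ?mulr0 ?mem_nth.
by apply/matrixP => i j; rewrite (ord1 i) -dotv_delta s_orth mxE.
Qed.

Definition chi (s g : vec) : int := if dotv s g == 0 then 1 else -1.

Lemma chiC s g : chi s g = chi g s.
Proof. by rewrite /chi dotvC. Qed.

Lemma chi0r s : chi s 0 = 1.
Proof. by rewrite /chi dotv0r eqxx. Qed.

Lemma chi0l g : chi 0 g = 1.
Proof. by rewrite chiC chi0r. Qed.

Lemma chiDr s g h : chi s (g + h) = chi s g * chi s h.
Proof. by rewrite /chi dotvDr F2_addr_eq0; do 2 case: (_ == 0). Qed.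

Lemma chiDl s t g : chi (s + t) g = chi s g * chi t g.
Proof. by rewrite chiC chiDr !(chiC g). Qed.

Lemma subr1_chi s g : 1 - chi s g = 2 * (dotv s g != 0)%:Z.
Proof. by rewrite /chi; case: (_ == 0). Qed.

Lemma subr1_chiM s g h :
  (1 - chi s g) * (1 - chi s h) = 4 * ((dotv s g != 0) && (dotv s h != 0))%:Z.
Proof. by rewrite !subr1_chi; do 2 case: (_ != 0). Qed.

Lemma sum_chi g : \sum_s chi s g = if g == 0 then (2 ^ n)%:Z else 0.
Proof.
have [->|g_nz] := eqVneq g 0.
  under eq_bigr do rewrite chi0r.
  by rewrite sumr_const card_mx card_Fp // mul1n natz.
have [i gi_nz] : exists i, g 0 i != 0.
  apply/existsP; apply: contraNT g_nz => /existsPn gi0.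
  by apply/eqP/matrixP => i j; rewrite (ord1 i) mxE; apply/eqP/negPn.
set S := \sum_s _; suff: S = - S by lia.
rewrite {1}/S (reindex_inj (addIr (delta_mx 0 i))) /= -sumrN.
apply: eq_bigr => s _; rewrite chiDl [chi (delta_mx _ _) _]chiC /chi dotv_delta.
by case: (F2_cases (g 0 i)) gi_nz => -> //; rewrite mulrN1.
Qed.

Definition fourier (x : vec -> int) (s : vec) : int := \sum_g chi s g * x g.

Lemma fourierZ c x s : fourier (fun g => c * x g) s = c * fourier x s.
Proof. by rewrite /fourier big_distrr; apply: eq_bigr => g _; rewrite mulrCA. Qed.

Definition delta (a : vec) (u : vec) : int := (u == a)%:Z.

Lemma fourier_delta a s : fourier (delta a) s = chi s a.
Proof.
rewrite /fourier (bigD1 a) //= /delta eqxx mulr1 big1 ?addr0 // => g /negbTE ->.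
by rewrite mulr0.
Qed.

Lemma fourierD x z s : fourier (fun u => x u + z u) s = fourier x s + fourier z s.
Proof. by rewrite /fourier -big_split; apply: eq_bigr => g _; rewrite mulrDr. Qed.

Lemma fourierB x z s : fourier (fun u => x u - z u) s = fourier x s - fourier z s.
Proof. by rewrite /fourier -sumrB; apply: eq_bigr => g _; rewrite mulrBr. Qed.

Lemma fourierK x g : fourier (fourier x) g = (2 ^ n)%:Z * x g.
Proof.
rewrite /fourier; under eq_bigr do rewrite big_distrr /=.
rewrite exchange_big /=.
have chi_sum h : \sum_s chi g s * (chi s h * x h) = (\sum_s chi s (g + h)) * x h.
  by rewrite big_distrl; apply: eq_bigr => s _; rewrite mulrA chiDr (chiC g).
under eq_bigr do rewrite chi_sum sum_chi.
rewrite (bigD1 g) //= addvv eqxx big1 ?addr0 // => h hg.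
suff /negbTE -> : g + h != 0 by rewrite mul0r.
by apply: contra hg; rewrite addr_eq0 oppv eq_sym.
Qed.
Lemma pow2_neq0 : (2 ^ n)%:Z != 0.
Proof. by rewrite eqz_nat expn_eq0. Qed.

Lemma fourier_inj x z : fourier x =1 fourier z -> x =1 z.
Proof.
move=> Fxz g; apply: (mulfI pow2_neq0).
by rewrite -!fourierK; apply: eq_bigr => s _; rewrite Fxz.
Qed.

Lemma fourier_preimage Y : (forall g, ((2 ^ n)%:Z %| fourier Y g)%Z) ->
  exists y, fourier y =1 Y.
Proof.
move=> dvdY; exists (fun g => (fourier Y g %/ (2 ^ n)%:Z)%Z) => s.
apply: (mulfI pow2_neq0); rewrite -fourierZ -fourierK.
by apply: eq_bigr => g _; rewrite [_ * (_ %/ _)%Z]mulrC divzK.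
Qed.

Lemma fourier_sub0_even x s : (2 %| fourier x s - fourier x 0)%Z.
Proof.
rewrite /fourier -sumrB; apply: rpred_sum => g _.
by rewrite chi0l -mulrBl -opprB subr1_chi mulNr -mulrA rpredN dvdz_mulr.
Qed.

Lemma sum_subr1_chi_fourier y g :
  \sum_s (1 - chi s g) * fourier y s = (2 ^ n)%:Z * (y 0 - y g).
Proof.
rewrite mulrBr -!fourierK /fourier -sumrB.
by apply: eq_bigr => s _; rewrite chi0l (chiC s) mulrBl mul1r.
Qed.

Lemma fourier_obstruction y g s1 : (3 <= n)%N ->
  ~ (forall s, (8 %| (1 - chi s g) * fourier y s - 4 * (s == s1)%:Z)%Z).
Proof.
move=> n_ge3 dvd8.
have : (8 %| \sum_s ((1 - chi s g) * fourier y s - 4 * (s == s1)%:Z))%Z.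
  by apply: rpred_sum => s _; apply: dvd8.
rewrite sumrB sum_subr1_chi_fourier -big_distrr /= (bigD1 s1) //= eqxx.
rewrite big1 => [|s /negbTE -> //]; rewrite addr0 mulr1.
have /dvdzP [q ->] : (8 %| (2 ^ n)%:Z)%Z.
  by rewrite -(subnKC n_ge3) expnD PoszM dvdz_mulr.
lia.
Qed.

(* Y agrees with D * fourier x off 0 and its value at 0 makes fourier Y divisible by
   2^n; this needs 2^n | 8, since the terms 2 k_t X_t (chi g t - 1) are only known to
   be multiples of 8. *)
Lemma fourier_lift x D b : (n <= 3)%N -> fourier x 0 = 0 ->
    (forall s, s != 0 -> (2 %| D s - b)%Z) ->
  exists y, forall s, s != 0 -> fourier y s = D s * fourier x s.
Proof.
move=> n_le3 Fx0 D_par.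
pose k s := if s == 0 then 0 else ((D s - b) %/ 2)%Z.
have D_k s : s != 0 -> D s = b + 2 * k s.
  by move=> s_nz; rewrite /k (negbTE s_nz) mulrC divzK ?D_par //; ring.
pose X := fourier x; pose S := \sum_t 2 * k t * X t.
pose Y s := (b + 2 * k s) * X s - (s == 0)%:Z * S.
suff /fourier_preimage [y Fy] g : ((2 ^ n)%:Z %| fourier Y g)%Z.
  by exists y => s s_nz; rewrite Fy /Y (negbTE s_nz) mul0r subr0 -D_k.
have -> : fourier Y g = b * fourier X g + \sum_t 2 * k t * X t * (chi g t - 1).
  have Y_t t : chi g t * Y t = b * (chi g t * X t) + 2 * k t * X t * (chi g t - 1)
                               + 2 * k t * X t - (t == 0)%:Z * (chi g t * S).
    by rewrite /Y; ring.
  rewrite /fourier (eq_bigr _ (fun t _ => Y_t t)) sumrB !big_split /=.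
  rewrite -big_distrr /= -/(fourier X g) -/S.
  suff -> : \sum_t (t == 0)%:Z * (chi g t * S) = S by rewrite addrK.
  rewrite (bigD1 0) //= eqxx chi0r !mul1r big1 ?addr0 // => t /negbTE ->.
  by rewrite mul0r.
apply: rpredD; first by rewrite fourierK mulrCA dvdz_mulr.
have /dvdz_trans : ((2 ^ n)%:Z %| 8)%Z by exact: (dvdn_exp2l 2 n_le3).
apply; apply: rpred_sum => t _.
have := fourier_sub0_even x t; rewrite Fx0 subr0 => /dvdzP [q Xq].
by rewrite /X Xq -opprB subr1_chi; apply/dvdzP; exists (- k t * q * (dotv g t != 0)%:Z); ring.
Qed.
End Characters.

(* F_2^3 is modelled by boolean triples, so that the two existence statements below
   are decided by computation. *)
Definition bit3 := (bool * bool * bool)%type.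

Definition dotb (a b : bit3) := (a.1.1 && b.1.1) (+) (a.1.2 && b.1.2) (+) (a.2 && b.2).

Definition bit3s : seq bit3 :=
  [seq (ab, c) | ab <- [seq (a, b) | a <- [:: true; false], b <- [:: true; false]],
                 c <- [:: true; false]].

Lemma mem_bit3s t : t \in bit3s.
Proof. by case: t => [[[] []] []]. Qed.

Lemma dotb_pair_support :
  all (fun t1 => all (fun t2 => [&& t1 != (false, false, false), t2 != (false, false, false)
                                   & t1 != t2] ==>
    has (fun g => has (fun h =>
      all (fun t => (dotb t g && dotb t h) == (t == t1) || (t == t2)) bit3s) bit3s) bit3s)
  bit3s) bit3s.
Proof. by vm_compute. Qed.

Definition bits (u : V) : bit3 :=
  (u 0 ord0 != 0, u 0 (lift ord0 ord0) != 0, u 0 (lift ord0 (lift ord0 ord0)) != 0).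

Definition of_bits (t : bit3) : V := \row_j (nth false [:: t.1.1; t.1.2; t.2] j)%:R.

Lemma bitsK : cancel bits of_bits.
Proof.
have F2_nz (a : 'F_2) : (a != 0)%:R = a by case: (F2_cases a) => ->.
move=> u; apply/rowP => j; rewrite mxE.
by case: j => [[|[|[|//]]] j3]; rewrite /= F2_nz; congr (u 0 _); apply: val_inj.
Qed.

Lemma of_bitsK : cancel of_bits bits.
Proof. by case=> [[[] []] []]; rewrite /bits !mxE /= ?oner_eq0 ?eqxx. Qed.

Lemma bits0 : bits 0 = (false, false, false).
Proof. by rewrite /bits !mxE eqxx. Qed.

Lemma dotv_bits u v : (dotv u v != 0) = dotb (bits u) (bits v).
Proof.
have F2_addr_neq0 (a b : 'F_2) : (a + b != 0) = (a != 0) (+) (b != 0).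
  by rewrite F2_addr_eq0; do 2 case: (_ == 0).
by rewrite dotvE !big_ord_recl big_ord0 addr0 !F2_addr_neq0 !mulf_eq0 !negb_or /dotb /= addbA.
Qed.

Lemma dotv_pair_support (s1 s2 : V) : s1 != 0 -> s2 != 0 -> s1 != s2 ->
  exists g h : V, forall s, (dotv s g != 0) && (dotv s h != 0) = (s == s1) || (s == s2).
Proof.
rewrite -!(can_eq bitsK) bits0 => s1_nz s2_nz s12.
have /allP/(_ _ (mem_bit3s (bits s1)))/allP/(_ _ (mem_bit3s (bits s2))) := dotb_pair_support.
rewrite s1_nz s2_nz s12 => /hasP [g _ /hasP [h _ /allP gh]].
exists (of_bits g), (of_bits h) => s.
by rewrite !dotv_bits !of_bitsK -!(can_eq bitsK); apply/eqP/gh/mem_bit3s.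
Qed.

Lemma dotv_triple_support : exists (g h k s0 : V), s0 != 0 /\
  forall s, [&& dotv s g != 0, dotv s h != 0 & dotv s k != 0] = (s == s0).
Proof.
exists (of_bits (true, false, false)), (of_bits (false, true, false)),
  (of_bits (false, false, true)), (of_bits (true, true, true)).
split=> [|s]; rewrite -(can_eq bitsK) ?bits0 of_bitsK //.
by rewrite !dotv_bits !of_bitsK; case: (bits s) => [[[] []] []].
Qed.

Section Cokernel.
Variable M : seq V.

Lemma inImL_ext z1 z2 : z1 =1 z2 -> inImL M z1 -> inImL M z2.
Proof. by move=> z12 [y zy]; exists y => u; rewrite -z12. Qed.

Lemma inImL_lincomb a b z1 z2 : inImL M z1 -> inImL M z2 ->
  inImL M (fun u => a * z1 u + b * z2 u).
Proof.
case=> [y1 z1y] [y2 z2y]; exists (fun w => a * y1 w + b * y2 w) => u.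
rewrite z1y z2y !big_distrr -big_split /=; apply: eq_bigr => w _; ring.
Qed.

Definition annihilates (m : int) (x : V -> int) := inImL M (fun u => m * x u).

Lemma annihilatesM a b x :
  annihilates (a * b) x <-> annihilates a (fun u => b * x u).
Proof. by split; apply: inImL_ext => u; rewrite mulrA. Qed.

Lemma annihilates_dvd x p q : (p %| q)%N ->
  annihilates p%:Z x -> annihilates q%:Z x.
Proof.
move=> /dvdnP [k ->] px; apply: inImL_ext (inImL_lincomb k%:Z 0 px px) => u.
by rewrite PoszM; ring.
Qed.

Lemma annihilates_gcd x p q : annihilates p%:Z x -> annihilates q%:Z x ->
  annihilates (gcdn p q)%:Z x.
Proof.
have [a [b abpq]] := Bezoutz p q.
move=> px qx; apply: inImL_ext (inImL_lincomb a b px qx) => u.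
by rewrite [RHS]mulrC -[(gcdn p q)%:Z]/(gcdz p q) -abpq; ring.
Qed.

Lemma coker_order_dvd x m j : coker_order M x m -> annihilates j%:Z x -> (m %| j)%N.
Proof.
case=> m_gt0 [mx m_min] jx; apply/gcdn_idPl/eqP.
rewrite eqn_leq (dvdn_leq m_gt0 (dvdn_gcdl m j)) leqNgt; apply/negP => lt_gcd_m.
by apply: (m_min _ _ (annihilates_gcd mx jx)); rewrite gcdn_gt0 m_gt0 lt_gcd_m.
Qed.

Lemma coker_order_pow2 x e : (0 < e)%N ->
  annihilates (2 ^ e)%:Z x -> ~ annihilates (2 ^ e.-1)%:Z x -> coker_order M x (2 ^ e).
Proof.
move=> e_gt0 ex not_e1x; split; first by rewrite expn_gt0.
split=> // j /andP [j_gt0 j_lt] jx; apply: not_e1x.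
have /dvdn_pfactor [//|i i_le gcd_i] := dvdn_gcdl (2 ^ e) j.
have ex_i := annihilates_gcd ex jx; rewrite gcd_i in ex_i.
apply: annihilates_dvd ex_i; rewrite dvdn_exp2l // -ltnS prednK //.
rewrite ltn_neqAle i_le andbT; apply: contraTneq j_lt => i_e.
by rewrite -leqNgt dvdn_leq // -i_e -gcd_i dvdn_gcdr.
Qed.
End Cokernel.

Section Eigenvalues.
Variable M : seq V.

Lemma lamE s : lam M s = (size M)%:Z - \sum_(v <- M) chi s v.
Proof. by []. Qed.

Lemma lam_count s : lam M s = (2 * count (fun v => dotv s v != 0%R) M)%N%:Z.
Proof.
rewrite lamE; elim: M => [|v M' IH] /=; first by rewrite big_nil.
rewrite big_cons; move: IH; rewrite /chi; case: (_ == 0) => /=; lia.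
Qed.

Lemma lam0 : lam M 0 = 0.
Proof.
by rewrite lam_count (eq_count (a2 := pred0)) ?count_pred0 // => v; rewrite dotv0l eqxx.
Qed.
End Eigenvalues.

Section Spectrum.
Variable M : seq V.
Hypothesis M_nz : all (fun v => v != 0) M.

Lemma lap_mul y u :
  \sum_w lap M u w * y w = (size M)%:Z * y u - \sum_(v <- M) y (u + v).
Proof.
have lapE w : lap M u w = (u == w)%:Z * (size M)%:Z - \sum_(v <- M) (u + v == w)%:Z.
  rewrite /lap count_intE; have [<-|_] := eqVneq u w; last by rewrite mul0r sub0r.
  rewrite mul1r big_seq big1 ?subr0 // => v /(allP M_nz) v_nz.
  by rewrite -{2}[u]addr0 (inj_eq (addrI u)) (negbTE v_nz).
under eq_bigr do rewrite lapE mulrBl.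
rewrite sumrB (bigD1 u) //= eqxx mul1r big1 ?addr0 => [|w]; last first.
  by rewrite eq_sym => /negbTE ->; rewrite !mul0r.
congr (_ - _); under eq_bigr do rewrite big_distrl /=.
rewrite exchange_big /=; apply: eq_bigr => v _.
rewrite (bigD1 (u + v)) //= eqxx mul1r big1 ?addr0 // => w.
by rewrite eq_sym => /negbTE ->; rewrite mul0r.
Qed.

Lemma fourier_lap y s :
  fourier (fun u => \sum_w lap M u w * y w) s = lam M s * fourier y s.
Proof.
rewrite /fourier; under eq_bigr do rewrite lap_mul mulrBr.
rewrite sumrB lamE mulrBl big_distrr; congr (_ - _).
  by apply: eq_bigr => g _; rewrite mulrCA.
under eq_bigr do rewrite big_distrr /=.
rewrite exchange_big big_distrl /=; apply: eq_bigr => v _.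
rewrite (reindex_inj (addIr v)) big_distrr /=; apply: eq_bigr => g _.
by rewrite -addrA addvv addr0 chiDr mulrCA mulrA.
Qed.

Lemma inImLP z : inImL M z <-> exists y, forall s, fourier z s = lam M s * fourier y s.
Proof.
split=> [[y zy] | [y Fzy]]; exists y.
  by move=> s; rewrite -fourier_lap /fourier; apply: eq_bigr => g _; rewrite zy.
by apply: fourier_inj => s; rewrite Fzy fourier_lap.
Qed.

Lemma annihilatesP m x : annihilates M m x <->
  exists y, forall s, m * fourier x s = lam M s * fourier y s.
Proof.
rewrite /annihilates inImLP.
by split=> [] [y xy]; exists y => s; rewrite -xy fourierZ.
Qed.
End Spectrum.

Section Exponent.
Variable M : seq V.
Hypothesis M_nz : all (fun v => v != 0) M.
Hypothesis M_span : <<M>>%VS = fullv.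

Lemma count_dotv_gt0 s : s != 0 -> (0 < count (fun v => dotv s v != 0%R) M)%N.
Proof.
move=> s_nz; rewrite -has_count; apply: contraNT s_nz => /hasPn sM0.
by apply/eqP/(dotv_span M_span) => v /sM0 /negPn /eqP.
Qed.

Definition oddpart s := (`|lam M s| `_2^')%N.

Lemma lam_factor s : s != 0 -> lam M s = (2 ^ d2 M s * oddpart s)%:Z.
Proof.
move=> s_nz; rewrite /oddpart /d2 lam_count /= -p_part partnC //.
by rewrite muln_gt0 count_dotv_gt0.
Qed.

Lemma lam_neq0 s : s != 0 -> lam M s != 0.
Proof. by move=> s_nz; rewrite lam_count eqz_nat muln_eq0 -lt0n count_dotv_gt0. Qed.

Lemma d2_gt0 s : s != 0 -> (0 < d2 M s)%N.
Proof.
move=> s_nz; rewrite /d2 lam_count logn_gt0 mem_primes /=.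
by rewrite muln_gt0 count_dotv_gt0 ?dvdn_mulr.
Qed.

Definition oddprod := (\prod_(s : V | s != 0%R) oddpart s)%N.

Lemma odd_oddprod : odd oddprod.
Proof.
apply: (big_ind odd) => // [a b odd_a odd_b|s _]; first by rewrite oddM odd_a.
by rewrite odd_2'nat part_pnat.
Qed.

Definition cofactor k s := (2 ^ (k - d2 M s) * (oddprod %/ oddpart s))%N.

Lemma lam_cofactor k s : s != 0 -> (d2 M s <= k)%N ->
  lam M s * (cofactor k s)%:Z = (2 ^ k)%:Z * oddprod%:Z.
Proof.
move=> s_nz le_dk; rewrite lam_factor // -!PoszM; congr Posz.
rewrite mulnCA -mulnA mulnA -expnD subnK // [(oddpart s * _)%N]mulnC divnK //.
by rewrite /oddprod (bigD1 s) //= dvdn_mulr.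
Qed.

Lemma odd_cofactor k s : s != 0 -> odd (cofactor k s) = (k <= d2 M s)%N.
Proof.
move=> s_nz; rewrite /cofactor oddM oddX orbF subn_eq0.
have := odd_oddprod; rewrite -{1}(@divnK (oddpart s) oddprod) ?oddM => [/andP [-> _]|].
  by rewrite andbT.
by rewrite /oddprod (bigD1 s) //= dvdn_mulr.
Qed.

Lemma lam_cancel k s a b : s != 0 -> (d2 M s <= k)%N ->
  lam M s * a = (2 ^ k)%:Z * oddprod%:Z * b -> a = (cofactor k s)%:Z * b.
Proof.
move=> s_nz le_dk; rewrite -(lam_cofactor s_nz le_dk) -mulrA.
exact/mulfI/lam_neq0.
Qed.

Definition dmax := (\max_(u : V | u != 0%R) d2 M u)%N.

Definition d2_const := [forall u : V, forall w : V,
  (u != 0) ==> (w != 0) ==> (d2 M u == d2 M w)].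

Definition exponent := if d2_const then dmax else dmax.+1.

Lemma d2_le_dmax s : s != 0 -> (d2 M s <= dmax)%N.
Proof. by move=> s_nz; apply: leq_bigmax_cond. Qed.

Lemma dmax_attained : exists2 s, s != 0 & d2 M s = dmax.
Proof.
have nz : (0 < #|[pred u : V | u != 0%R]|)%N.
  apply/card_gt0P; exists (of_bits (true, true, true)).
  by rewrite inE -(can_eq bitsK) of_bitsK bits0.
by have [s] := eq_bigmax_cond (d2 M) nz; exists s.
Qed.

Lemma d2_const_dmax s : d2_const -> s != 0 -> d2 M s = dmax.
Proof.
move=> /forallP d2_eq s_nz; have [t t_nz <-] := dmax_attained.
by apply/eqP; have /forallP/(_ t) := d2_eq s; rewrite s_nz t_nz.
Qed.

Lemma d2_lt_dmax : ~~ d2_const -> exists2 s, s != 0 & (d2 M s < dmax)%N.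
Proof.
move=> /forallPn [u /forallPn [w]]; rewrite !negb_imply => /and3P [u_nz w_nz d2_uw].
have [d2u|d2u] := eqVneq (d2 M u) dmax; last by exists u; rewrite // ltn_neqAle d2u d2_le_dmax.
by exists w; rewrite // ltn_neqAle d2_le_dmax // andbT -d2u eq_sym.
Qed.

Lemma dmax_gt0 : (0 < dmax)%N.
Proof. by have [s s_nz <-] := dmax_attained; apply: d2_gt0. Qed.

Lemma exponent_gt0 : (0 < exponent)%N.
Proof. by rewrite /exponent; case: ifP => _; [|apply: leqW]; apply: dmax_gt0. Qed.

Lemma d2_le_exponent s : s != 0 -> (d2 M s <= exponent)%N.
Proof.
by move=> s_nz; rewrite /exponent; case: ifP => _; [|apply: leqW]; apply: d2_le_dmax.
Qed.

Lemma annihilates_exponent x :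
  fourier x 0 = 0 -> annihilates M ((2 ^ exponent)%:Z * oddprod%:Z) x.
Proof.
move=> Fx0.
have cofactor_parity s : s != 0 -> (2 %| (cofactor exponent s)%:Z - d2_const%:Z)%Z.
  move=> s_nz; apply: dvdz2_oddB; rewrite odd_cofactor // /exponent.
  by case: ifP => [/d2_const_dmax -> // | _]; rewrite ?leqnn // ltnNge d2_le_dmax.
have [y Fy] := fourier_lift (leqnn 3) Fx0 cofactor_parity.
apply/annihilatesP => //; exists y => s.
have [->|s_nz] := eqVneq s 0; first by rewrite lam0 Fx0 !mul0r mulr0.
by rewrite Fy // mulrA lam_cofactor ?d2_le_exponent.
Qed.

Lemma annihilates_fourier0 m x : m != 0 -> annihilates M m x -> fourier x 0 = 0.
Proof.
move=> m_nz /annihilatesP [//|y /(_ 0)]; rewrite lam0 mul0r => /eqP.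
by rewrite mulf_eq0 (negbTE m_nz) => /eqP.
Qed.

Lemma not_annihilates_nonconst : ~~ d2_const ->
  exists x0, fourier x0 0 = 0 /\ ~ annihilates M ((2 ^ dmax)%:Z * oddprod%:Z) x0.
Proof.
move=> nonconst; have [s1 s1_nz d2_s1] := dmax_attained.
have [s2 s2_nz d2_s2] := d2_lt_dmax nonconst.
have s12 : s1 != s2 by apply: contraTneq d2_s2 => <-; rewrite d2_s1 ltnn.
have [g [h gh_supp]] := dotv_pair_support s1_nz s2_nz s12.
pose x0 u := delta 0 u - delta h u.
have Fx0 s : fourier x0 s = 1 - chi s h by rewrite fourierB !fourier_delta chi0r.
exists x0; split=> [|/annihilatesP [//|y Fy]]; first by rewrite Fx0 chi0l subrr.
apply: (@fourier_obstruction _ y g s1 (leqnn 3)) => s.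
have [->|s_nz] := eqVneq s 0; first by rewrite chi0l eq_sym (negbTE s1_nz) subrr mul0r.
have := Fy s; rewrite Fx0 => /esym/(lam_cancel s_nz (d2_le_dmax s_nz)) ->.
rewrite mulrCA subr1_chiM gh_supp mulrCA -PoszM.
apply: dvdz8_mul4B; rewrite oddM odd_cofactor //.
have [->|_] := eqVneq s s1; first by rewrite d2_s1 leqnn.
have [->|_] := eqVneq s s2; last by rewrite andbF.
by move: d2_s2; rewrite ltnNge => /negbTE ->.
Qed.

Lemma not_annihilates_const : d2_const ->
  exists x0, fourier x0 0 = 0 /\ ~ annihilates M ((2 ^ dmax.-1)%:Z * oddprod%:Z) x0.
Proof.
move=> const; have [g [h [k [s0 [s0_nz ghk_supp]]]]] := dotv_triple_support.
pose x0 u := delta 0 u - delta g u - delta h u + delta (g + h) u.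
have Fx0 s : fourier x0 s = 4 * ((dotv s g != 0) && (dotv s h != 0))%:Z.
  by rewrite -subr1_chiM fourierD !fourierB !fourier_delta chi0r chiDr; ring.
exists x0; split=> [|/annihilatesP [//|y Fy]]; first by rewrite Fx0 !dotv0l.
apply: (@fourier_obstruction _ y k s0 (leqnn 3)) => s.
have [->|s_nz] := eqVneq s 0; first by rewrite chi0l eq_sym (negbTE s0_nz) subrr mul0r.
have d2_s := d2_const_dmax const s_nz.
have : lam M s * fourier y s = (2 ^ dmax)%:Z * oddprod%:Z
                               * (2 * ((dotv s g != 0) && (dotv s h != 0))%:Z).
  rewrite -Fy Fx0 -[in RHS](prednK dmax_gt0) expnS PoszM.
  by move: (2 ^ dmax.-1)%N => p; ring.
move/(lam_cancel s_nz (eq_leq d2_s)) ->.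
have -> : (1 - chi s k)
          * ((cofactor dmax s)%:Z * (2 * ((dotv s g != 0) && (dotv s h != 0))%:Z))
        = 4 * (cofactor dmax s * (s == s0))%N%:Z.
  by rewrite -ghk_supp subr1_chi PoszM; do 3 case: (_ != 0%R); rewrite /=; ring.
by apply: dvdz8_mul4B; rewrite oddM odd_cofactor // d2_s leqnn oddb.
Qed.
End Exponent.

Theorem mainTheorem15 (M : seq V) :
  all (fun v => v != 0) M ->
  (<<M>>%VS = fullv) ->
  (\big[gcdn/0%N]_(v <- undup M) count_mem v M)%N = 1%N ->
  let d7 := \max_(u : V | u != 0%R) d2 M u in
  let e := if [forall u : V, forall w : V,
                 (u != 0) ==> (w != 0) ==> (d2 M u == d2 M w)]
           then d7 else d7.+1 in
  (exists x : V -> int, coker_order M x (2 ^ e)%N) /\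
  (forall (x : V -> int) (k : nat), coker_order M x (2 ^ k)%N -> (k <= e)%N).
Proof.
move=> M_nz M_span _ d7 e; have -> : e = exponent M by [].
have upper := annihilates_exponent M_nz M_span.
split.
  have [x0 [Fx0 not_ann]] : exists x0, fourier x0 0 = 0 /\
      ~ annihilates M ((2 ^ (exponent M).-1)%:Z * (oddprod M)%:Z) x0.
    rewrite /exponent; case: ifP => [const | /negbT nonconst].
      exact: not_annihilates_const.
    exact: not_annihilates_nonconst.
  exists (fun u => (oddprod M)%:Z * x0 u).
  apply: coker_order_pow2 (exponent_gt0 M_span) _ _; first exact/annihilatesM/upper.
  by move/annihilatesM.
move=> x k ord_x; have [k_gt0 [kx _]] := ord_x.
have /(coker_order_dvd ord_x) : annihilates M (2 ^ exponent M * oddprod M)%N%:Z x.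
  by rewrite PoszM; apply/upper/(annihilates_fourier0 M_nz _ kx); rewrite eqz_nat -lt0n.
by rewrite Gauss_dvdl ?coprimeXl ?coprime2n ?odd_oddprod // dvdn_Pexp2l.
Qed.
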